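(* Let $\mathcal C$ be a category with cofibrations enriched over abelian groups, $w$ an admissible class of morphisms in $\mathcal C$ such that $(\mathcal C,w)$ satisfies the factorization axiom, $\mathcal S$ a $w$-Serre subcategory of $\mathcal C$, and $u$ an admissible class of morphisms with $w\subseteq u$. Then: (1) the class $w_{\mathcal S}$ of $\mathcal S$-weak equivalences is an admissible class of morphisms in $\mathcal C$ containing $w$; (2) $\mathcal C^{w_{\mathcal S}}=\mathcal S$ and $w_{\mathcal C^u}=u$.
   Context: A cofibration sequence is $x\rightarrowtail y\twoheadrightarrow y/x$. A class $w$ is admissible if it contains all isomorphisms, satisfies two-out-of-three, and for any commutative diagram of cofibration sequences $x\rightarrowtail y\twoheadrightarrow y/x$ over $x'\rightarrowtail y'\twoheadrightarrow y'/x'$ with vertical maps $a,b,c$, two of $a,b,c$ in $w$ implies the third is in $w$. Factorization axiom: every $f\colon x\to y$ factors as $f=p_f i_f$ with $i_f\colon x\rightarrowtail u_f$ a cofibration and $p_f\colon u_f\to y$ in $w$; $(i_f,p_f,u_f)$ is a factorization of $f$. A $w$-Serre subcategory $\mathcal S$ is a full subcategory such that for every cofibration sequence two of $x,y,y/x$ in $\mathcal S$ implies the third is, and which is closed under finite zig-zags of morphisms in $w$. For an admissible class $u\supseteq w$, $\mathcal C^u$ is the full subcategory of objects $x$ with $0\to x$ in $u$ (it is a $w$-Serre subcategory). A morphism $f\colon x\to y$ is an $\mathcal S$-weak equivalence if for some (equivalently, every) factorization $(i_f,p_f,u_f)$ of $f$ the cokernel $u_f/x$ lies in $\mathcal S$;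 $w_{\mathcal S}$ denotes the class of $\mathcal S$-weak equivalences. *)

From HB Require Import structures.
From mathcomp Require Import all_boot all_algebra.
From Stdlib Require Import Relations.
Set Implicit Arguments. Unset Strict Implicit. Unset Printing Implicit Defensive.
Import GRing.Theory.
Local Open Scope ring_scope.

Record AbCat := {
  Obj :> Type;
  CHom : Obj -> Obj -> zmodType;
  idm : forall x, CHom x x;
  comp : forall x y z, CHom y z -> CHom x y -> CHom x z;
  comp_assoc : forall x y z t (h : CHom z t) (g : CHom y z) (f : CHom x y),
      comp h (comp g f) = comp (comp h g) f;
  comp_id_l : forall x y (f : CHom x y), comp (idm y) f = f;
  comp_id_r : forall x y (f : CHom x y), comp f (idm x) = f;
  comp_addl : forall x y z (g g' : CHom y z) (f : CHom x y),
      comp (g + g') f = comp g f + comp g' f;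
  comp_addr : forall x y z (g : CHom y z) (f f' : CHom x y),
      comp g (f + f') = comp g f + comp g f'
}.
Arguments CHom {_}.
Arguments idm {_}.
Arguments comp {_ x y z}.

Definition is_iso (C : AbCat) (x y : C) (f : CHom x y) : Prop :=
  exists g : CHom y x, comp g f = idm x /\ comp f g = idm y.

(* Pushout square   a --f--> b
                    |g       |g'
                    v        v
                    c --f'-> d      *)
Definition is_pushout (C : AbCat) (a b c d : C)
  (f : CHom a b) (g : CHom a c) (f' : CHom c d) (g' : CHom b d) : Prop :=
  comp g' f = comp f' g /\
  forall (e : C) (h : CHom b e) (k : CHom c e), comp h f = comp k g ->
    exists m : CHom d e, (comp m g' = h /\ comp m f' = k) /\
      forall m' : CHom d e, comp m' g' = h -> comp m' f' = k -> m' = m.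

Record CofCat := {
  cat :> AbCat;
  zero : cat;
  zero_initial : forall (x : cat) (f g : CHom zero x), f = g;
  zero_terminal : forall (x : cat) (f g : CHom x zero), f = g;
  cof : forall x y : cat, CHom x y -> Prop;
  cof_iso : forall (x y : cat) (f : CHom x y), is_iso f -> cof f;
  cof_zero : forall x : cat, cof (0 : CHom zero x);
  cof_comp : forall (x y z : cat) (g : CHom y z) (f : CHom x y),
      cof f -> cof g -> cof (comp g f);
  cof_pushout : forall (a b c : cat) (i : CHom a b) (f : CHom a c), cof i ->
      exists (d : cat) (i' : CHom c d) (f' : CHom b d),
        is_pushout i f i' f' /\ cof i'
}.
Arguments zero {_}.
Arguments cof {_ x y}.

Definition MorClass (C : CofCat) := forall x y : C, CHom x y -> Prop.

Definition cofseq (C : CofCat) (x y q : C) (i : CHom x y) (p : CHom y q) : Prop :=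
  cof i /\ is_pushout i (0 : CHom x zero) (0 : CHom zero q) p.

Definition admissible (C : CofCat) (w : MorClass C) : Prop :=
  (forall (x y : C) (f : CHom x y), is_iso f -> w _ _ f) /\
  (forall (x y z : C) (f : CHom x y) (g : CHom y z),
      (w _ _ f -> w _ _ g -> w _ _ (comp g f)) /\
      (w _ _ f -> w _ _ (comp g f) -> w _ _ g) /\
      (w _ _ g -> w _ _ (comp g f) -> w _ _ f)) /\
  (forall (x y q x' y' q' : C) (i : CHom x y) (p : CHom y q)
          (i' : CHom x' y') (p' : CHom y' q')
          (a : CHom x x') (b : CHom y y') (c : CHom q q'),
      cofseq i p -> cofseq i' p' ->
      comp b i = comp i' a -> comp c p = comp p' b ->
      (w _ _ a -> w _ _ b -> w _ _ c) /\
      (w _ _ a -> w _ _ c -> w _ _ b) /\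
      (w _ _ b -> w _ _ c -> w _ _ a)).

Definition factorization_axiom (C : CofCat) (w : MorClass C) : Prop :=
  forall (x y : C) (f : CHom x y),
    exists (u : C) (i : CHom x u) (p : CHom u y), cof i /\ w _ _ p /\ comp p i = f.

Definition wzigzag (C : CofCat) (w : MorClass C) : relation C :=
  clos_refl_sym_trans C (fun x y => exists f : CHom x y, w _ _ f).

(* w-Serre subcategory (full subcategory given by a predicate on objects);
   we require it to contain the zero object (i.e. to be nonempty). *)
Definition wSerre (C : CofCat) (w : MorClass C) (S : C -> Prop) : Prop :=
  S zero /\
  (forall (x y q : C) (i : CHom x y) (p : CHom y q), cofseq i p ->
      (S x -> S y -> S q) /\ (S x -> S q -> S y) /\ (S y -> S q -> S x)) /\
  (forall x y : C, wzigzag w x y -> S x -> S y).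

Definition Csup (C : CofCat) (u : MorClass C) : C -> Prop :=
  fun x => u _ _ (0 : CHom zero x).

Definition wS (C : CofCat) (w : MorClass C) (S : C -> Prop) : MorClass C :=
  fun x y f => exists (u q : C) (i : CHom x u) (p : CHom u y) (pi : CHom u q),
    cof i /\ w _ _ p /\ comp p i = f /\ cofseq i pi /\ S q.
Arguments wS {C} w S x y f.
Arguments Csup {C} u x.

(* Factor f as x >-> u_f -> y with u_f -> y in w.  Any two such factorizations
   are dominated by a third one (factor the map out of the pushout of the two
   cofibrations), and the gluing axiom turns the comparison maps into maps in w
   between the cokernels; hence S-membership of u_f/x is independent of the
   factorization.  Each axiom of an admissible class for w_S then reduces, via
   the third isomorphism theorem for cofibration sequences and pushouts of
   cofibrations, to the two-out-of-three property of S on a single cofibration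
   sequence of cokernels.  For C^u one compares a cofibration with its cokernel
   through the gluing axiom of u. *)
From HB Require Import structures.
From mathcomp Require Import all_boot all_algebra.
From Stdlib Require Import Relations Setoid.
Set Implicit Arguments. Unset Strict Implicit. Unset Printing Implicit Defensive.
Import GRing.Theory.
Local Open Scope ring_scope.

Section Preadditive.
Variable C : AbCat.

Lemma comp0l (x y z : C) (f : CHom x y) : comp (0 : CHom y z) f = 0.
Proof. by apply: (addrI (comp 0 f)); rewrite addr0 -comp_addl addr0. Qed.

Lemma comp0r (x y z : C) (g : CHom y z) : comp g (0 : CHom x y) = 0.
Proof. by apply: (addrI (comp g 0)); rewrite addr0 -comp_addr addr0. Qed.

Lemma iso_idm (x : C) : is_iso (idm x).
Proof. by exists (idm x); rewrite comp_id_l. Qed.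

Lemma pushout_uniq (a b c d e : C) (f : CHom a b) (g : CHom a c)
    (f' : CHom c d) (g' : CHom b d) (m1 m2 : CHom d e) :
  is_pushout f g f' g' -> comp m1 g' = comp m2 g' -> comp m1 f' = comp m2 f' ->
  m1 = m2.
Proof.
move=> [sq un] e1 e2.
have [m [_ mu]] := un e (comp m1 g') (comp m1 f') (ltac:(by rewrite -!comp_assoc sq)).
by rewrite (mu m1) // (mu m2) -?e1 -?e2.
Qed.

Lemma pushout_sym (a b c d : C) (f : CHom a b) (g : CHom a c)
    (f' : CHom c d) (g' : CHom b d) :
  is_pushout f g f' g' -> is_pushout g f g' f'.
Proof.
move=> [sq un]; split=> // e h k hk.
have [m [[m1 m2] mu]] := un e k h (esym hk).
by exists m; split=> // m' h1 h2; apply: mu.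
Qed.

End Preadditive.

Section Cokernels.
Variable C : CofCat.

Definition is_cokernel (x y q : C) (i : CHom x y) (p : CHom y q) :=
  comp p i = 0 /\ forall (e : C) (h : CHom y e), comp h i = 0 ->
    exists m : CHom q e, comp m p = h /\ forall m' : CHom q e, comp m' p = h -> m' = m.

Lemma cofseqE (x y q : C) (i : CHom x y) (p : CHom y q) :
  cofseq i p <-> cof i /\ is_cokernel i p.
Proof.
split.
- move=> [ci [sq un]]; split=> //; split; first by rewrite sq comp0l.
  move=> e h hi.
  have [m [[m1 _] mu]] := un e h 0 (ltac:(by rewrite hi comp0l)).
  by exists m; split=> // m' hm'; apply: mu => //; apply: zero_initial.
- move=> [ci [p0 un]]; split=> //; split; first by rewrite p0 comp0l.
  move=> e h k hk; have [m [m1 mu]] := un e h (ltac:(by rewrite hk comp0r)).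
  exists m; split; first by split=> //; apply: zero_initial.
  by move=> m' h1 _; apply: mu.
Qed.

Lemma cofseq_comp0 (x y q : C) (i : CHom x y) (p : CHom y q) :
  cofseq i p -> comp p i = 0.
Proof. by case/cofseqE=> _ []. Qed.

Lemma cofseq_lift (x y q e : C) (i : CHom x y) (p : CHom y q) (h : CHom y e) :
  cofseq i p -> comp h i = 0 -> exists m : CHom q e, comp m p = h.
Proof. by case/cofseqE=> _ [_ un] /un [m [m1 _]]; exists m. Qed.

Lemma cofseq_epi (x y q e : C) (i : CHom x y) (p : CHom y q) (m m' : CHom q e) :
  cofseq i p -> comp m p = comp m' p -> m = m'.
Proof.
case/cofseqE=> _ [p0 un] eq_mp.
have [n [_ nu]] := un e (comp m p) (ltac:(by rewrite -comp_assoc p0 comp0r)).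
by rewrite (nu m) // (nu m') // -eq_mp.
Qed.

Lemma cofseq_exists (x y : C) (i : CHom x y) :
  cof i -> exists (q : C) (p : CHom y q), cofseq i p.
Proof.
move=> ci; have [d [i' [p [po _]]]] := cof_pushout (0 : CHom x zero) ci.
by exists d, p; split=> //; rewrite (zero_initial i' 0) in po.
Qed.

Lemma cofseq_induced (x y q x' y' q' : C) (i : CHom x y) (p : CHom y q)
    (i' : CHom x' y') (p' : CHom y' q') (a : CHom x x') (b : CHom y y') :
  cofseq i p -> cofseq i' p' -> comp b i = comp i' a ->
  exists c : CHom q q', comp c p = comp p' b.
Proof.
move=> cs cs' sq; apply: (cofseq_lift cs).
by rewrite -comp_assoc sq comp_assoc (cofseq_comp0 cs') comp0l.
Qed.

Lemma cofseq_idm (x : C) : cofseq (idm x) (0 : CHom x zero).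
Proof.
apply/cofseqE; split; first exact/cof_iso/iso_idm.
split; first by rewrite comp0l.
move=> e h; rewrite comp_id_r => ->.
by exists 0; split=> [|m' _]; [rewrite comp0l | apply: zero_initial].
Qed.

Lemma cofseq_from_zero_iso (u q : C) (i : CHom zero u) (p : CHom u q) :
  cofseq i p -> is_iso p.
Proof.
move=> cs; have [m mp] := cofseq_lift (h := idm u) cs (zero_initial _ _).
exists m; split=> //; apply: (cofseq_epi cs).
by rewrite -comp_assoc mp comp_id_l comp_id_r.
Qed.

Lemma pushout_cofseq (a b c d q : C) (f : CHom a b) (g : CHom a c)
    (f' : CHom c d) (g' : CHom b d) (p : CHom b q) :
  cofseq f p -> is_pushout f g f' g' -> cof f' ->
  exists pi : CHom d q, comp pi g' = p /\ cofseq f' pi.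
Proof.
move=> cs po cf'; have [sq un] := po.
have [m [[m1 m2] _]] := un q p 0 (ltac:(by rewrite (cofseq_comp0 cs) comp0l)).
exists m; split=> //; apply/cofseqE; split=> //; split=> // e h hf.
have [n n1] := cofseq_lift (h := comp h g') cs
  (ltac:(by rewrite -comp_assoc sq comp_assoc hf comp0l)).
exists n; split.
  by apply: (pushout_uniq po); rewrite -comp_assoc ?m1 ?m2 // comp0r hf.
by move=> n' hn'; apply: (cofseq_epi cs); rewrite n1 -m1 comp_assoc hn'.
Qed.

(* Third isomorphism theorem: for x >-> y >-> z one has
   y/x >-> z/x ->> z/y. *)
Lemma cofseq_comp (x y z q1 q3 : C) (i : CHom x y) (j : CHom y z)
    (p1 : CHom y q1) (p3 : CHom z q3) :
  cofseq i p1 -> cofseq j p3 ->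
  exists (d : C) (f : CHom z d) (j' : CHom q1 d) (t : CHom d q3),
    [/\ cofseq (comp j i) f, cofseq j' t & comp f j = comp j' p1].
Proof.
move=> cs1 cs3; have [ci _] := cs1; have [cj _] := cs3.
have [d [j' [f [po cj']]]] := cof_pushout p1 cj.
have [t [_ cst]] := pushout_cofseq cs3 po cj'.
exists d, f, j', t; have [sq un] := po; split=> //.
apply/cofseqE; split; first exact: cof_comp.
split; first by rewrite comp_assoc sq -comp_assoc (cofseq_comp0 cs1) comp0r.
move=> e h hji.
have [k k1] := cofseq_lift (h := comp h j) cs1 (ltac:(by rewrite -comp_assoc)).
have [m [[m1 m2] mu]] := un e h k (esym k1).
exists m; split=> // m' hm'; apply: mu => //; apply: (cofseq_epi cs1).
by rewrite -comp_assoc -sq comp_assoc hm' k1.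
Qed.

Lemma cof_pushout2 (a b c : C) (f : CHom a b) (g : CHom a c) :
  cof f -> cof g ->
  exists (d : C) (f' : CHom c d) (g' : CHom b d),
    [/\ is_pushout f g f' g', cof f' & cof g'].
Proof.
move=> cf cg.
have [d [f' [g' [po cf']]]] := cof_pushout g cf.
have [d2 [f2 [g2 [po2 cf2]]]] := cof_pushout f cg.
have [sq un] := po; have [sq2 un2] := po2.
have [phi [[ph1 ph2] _]] := un2 d f' g' (esym sq).
have [psi [[ps1 ps2] _]] := un d2 f2 g2 (esym sq2).
exists d, f', g'; split=> //; rewrite -ph2; apply: cof_comp => //.
apply: cof_iso; exists psi; split.
  by apply: (pushout_uniq po2); rewrite -comp_assoc ?ph1 ?ph2 ?ps1 ?ps2 !comp_id_l.
by apply: (pushout_uniq po); rewrite -comp_assoc ?ph1 ?ph2 ?ps1 ?ps2 !comp_id_l.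
Qed.

End Cokernels.

Section AdmissibleClass.
Variables (C : CofCat) (w : MorClass C).
Arguments w : clear implicits.
Hypothesis hw : admissible w.

Lemma w_iso (x y : C) (f : CHom x y) : is_iso f -> w _ _ f.
Proof. exact: hw.1. Qed.

Lemma w_idm (x : C) : w _ _ (idm x).
Proof. exact/w_iso/iso_idm. Qed.

Lemma w_comp (x y z : C) (f : CHom x y) (g : CHom y z) :
  w _ _ f -> w _ _ g -> w _ _ (comp g f).
Proof. exact: (hw.2.1 _ _ _ f g).1. Qed.

Lemma w_cancell (x y z : C) (f : CHom x y) (g : CHom y z) :
  w _ _ g -> w _ _ (comp g f) -> w _ _ f.
Proof. exact: (hw.2.1 _ _ _ f g).2.2. Qed.

Lemma w_gluing (x y q x' y' q' : C) (i : CHom x y) (p : CHom y q)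
    (i' : CHom x' y') (p' : CHom y' q')
    (a : CHom x x') (b : CHom y y') (c : CHom q q') :
  cofseq i p -> cofseq i' p' -> comp b i = comp i' a -> comp c p = comp p' b ->
  (w _ _ a -> w _ _ b -> w _ _ c) /\
  (w _ _ a -> w _ _ c -> w _ _ b) /\
  (w _ _ b -> w _ _ c -> w _ _ a).
Proof. exact: hw.2.2. Qed.

Lemma cofseq_map_w (x y q x' y' q' : C) (i : CHom x y) (p : CHom y q)
    (i' : CHom x' y') (p' : CHom y' q') (a : CHom x x') (b : CHom y y') :
  cofseq i p -> cofseq i' p' -> comp b i = comp i' a -> w _ _ a -> w _ _ b ->
  exists2 c : CHom q q', comp c p = comp p' b & w _ _ c.
Proof.
move=> cs cs' sq wa wb; have [c hc] := cofseq_induced cs cs' sq.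
by exists c => //; apply: (w_gluing cs cs' sq hc).1.
Qed.

(* Glue against the cofibration sequence x = x ->> 0. *)
Lemma w_cof_iff_cokernel (x y q : C) (i : CHom x y) (p : CHom y q) :
  cofseq i p -> (w _ _ i <-> Csup w q).
Proof.
move=> cs; have sq : comp i (idm x) = comp i (idm x) by [].
have sq' : comp (0 : CHom zero q) (0 : CHom x zero) = comp p i.
  by rewrite (cofseq_comp0 cs) comp0l.
have [wc [wb _]] := w_gluing (cofseq_idm x) cs sq sq'.
by split; [apply: wc | apply: wb]; apply: w_idm.
Qed.

Lemma Csup_w_iff (x y : C) (f : CHom x y) : w _ _ f -> (Csup w x <-> Csup w y).
Proof.
move=> wf; have f0 : comp f (0 : CHom zero x) = 0 by apply: zero_initial.
rewrite /Csup -f0; split=> [w0 | w0f]; [exact: w_comp w0 wf | exact: w_cancell wf w0f].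
Qed.

End AdmissibleClass.

Lemma Csup_wSerre (C : CofCat) (w u : MorClass C) :
  admissible u -> (forall (x y : C) (f : CHom x y), w _ _ f -> u _ _ f) ->
  wSerre w (Csup u).
Proof.
move=> hu wu; split; [|split].
- by rewrite /Csup (zero_initial 0 (idm zero)); apply: w_idm.
- move=> x y q i p cs.
  exact: (w_gluing (a := 0) (b := 0) (c := 0) hu (cofseq_idm zero) cs
    (zero_initial _ _) (zero_initial _ _)).
- move=> x y xy; suff -> : Csup u x <-> Csup u y by [].
  elim: xy => {x y} [x y [f /wu uf] | x | x y _ IH | x y z _ IH1 _ IH2] //.
  + exact (Csup_w_iff hu uf).
  + by rewrite IH.
  + by rewrite IH1 IH2.
Qed.

Section SerreWeakEquivalences.
Variables (C : CofCat) (w : MorClass C).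
Arguments w : clear implicits.
Hypotheses (hw : admissible w) (hfa : factorization_axiom w).

Lemma factorization_cofseq (x y : C) (f : CHom x y) :
  exists (u q : C) (i : CHom x u) (p : CHom u y) (pi : CHom u q),
    [/\ cofseq i pi, w _ _ p & comp p i = f].
Proof.
have [u [i [p [ci [wp pf]]]]] := hfa f.
by have [q [pi cs]] := cofseq_exists ci; exists u, q, i, p, pi.
Qed.

(* Both factorizations are refined by factoring the induced map out of the
   pushout of the two cofibrations. *)
Lemma factorization_cokernels_wzigzag (x y u u' q q' : C) (f : CHom x y)
    (i : CHom x u) (p : CHom u y) (pi : CHom u q)
    (i' : CHom x u') (p' : CHom u' y) (pi' : CHom u' q') :
  cofseq i pi -> w _ _ p -> comp p i = f ->
  cofseq i' pi' -> w _ _ p' -> comp p' i' = f -> wzigzag w q q'.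
Proof.
move=> cs wp pf cs' wp' pf'; have [ci _] := cs; have [ci' _] := cs'.
have [P [g [g' [[sq un] cg]]]] := cof_pushout i ci'.
have [h [[h1 h2] _]] := un y p' p (ltac:(by rewrite pf pf')).
have [v [j [r [cj [wr rj]]]]] := hfa h.
have wjg : w _ _ (comp j g) by apply: (w_cancell hw wr); rewrite comp_assoc rj h2.
have wjg' : w _ _ (comp j g') by apply: (w_cancell hw wr); rewrite comp_assoc rj h1.
have [q'' [pi'' cs'']] := cofseq_exists (cof_comp ci (cof_comp cg cj)).
have [c _ wc] := cofseq_map_w (a := idm x) (b := comp j g) hw cs cs''
  (ltac:(by rewrite comp_id_r)) (w_idm hw x) wjg.
have [c' _ wc'] := cofseq_map_w (a := idm x) (b := comp j g') hw cs' cs''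
  (ltac:(by rewrite comp_id_r -!comp_assoc sq)) (w_idm hw x) wjg'.
apply: (@rst_trans _ _ _ q''); first by apply: rst_step; exists c.
by apply/rst_sym/rst_step; exists c'.
Qed.

Variable S : C -> Prop.
Hypothesis hS : wSerre w S.

Lemma S_w_iff (x y : C) (f : CHom x y) : w _ _ f -> (S x <-> S y).
Proof.
move=> wf; have [_ [_ hz]] := hS.
have xy : wzigzag w x y by apply: rst_step; exists f.
by split; apply: hz; [|apply: rst_sym].
Qed.

Lemma S_cofseq (x y q : C) (i : CHom x y) (p : CHom y q) :
  cofseq i p ->
  (S x -> S y -> S q) /\ (S x -> S q -> S y) /\ (S y -> S q -> S x).
Proof. exact: hS.2.1. Qed.

Lemma wS_iff_cokernel (x y u q : C) (f : CHom x y)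
    (i : CHom x u) (p : CHom u y) (pi : CHom u q) :
  cofseq i pi -> w _ _ p -> comp p i = f -> (wS w S _ _ f <-> S q).
Proof.
move=> cs wp pf; split=> [[u' [q' [i' [p' [pi' [_ [wp' [pf' [cs' Sq']]]]]]]]] | Sq].
- have [_ [_ hz]] := hS; apply: hz Sq'.
  exact: factorization_cokernels_wzigzag cs' wp' pf' cs wp pf.
- by have [ci _] := cs; exists u, q, i, p, pi.
Qed.

Lemma wS_cofseq (x y q : C) (s : CHom x y) (t : CHom y q) :
  cofseq s t -> (wS w S _ _ s <-> S q).
Proof. by move=> cs; apply: (wS_iff_cokernel cs (w_idm hw y) (comp_id_l s)). Qed.

Lemma wS_of_w (x y : C) (f : CHom x y) : w _ _ f -> wS w S _ _ f.
Proof.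
move=> wf; have [u [q [i [p [pi [cs wp pf]]]]]] := factorization_cofseq f.
apply/(wS_iff_cokernel cs wp pf).
have wi : w _ _ i by apply: (w_cancell hw wp); rewrite pf.
have wq := (w_cof_iff_cokernel hw cs).1 wi.
by have [S0 _] := hS; apply/(S_w_iff wq).
Qed.

Lemma wS_comp_wl (x y z : C) (s : CHom x y) (e : CHom y z) :
  w _ _ e -> (wS w S _ _ (comp e s) <-> wS w S _ _ s).
Proof.
move=> we; have [u [q [i [p [pi [cs wp pf]]]]]] := factorization_cofseq s.
rewrite (wS_iff_cokernel cs wp pf).
by apply: (wS_iff_cokernel cs (w_comp hw wp we)); rewrite -comp_assoc pf.
Qed.

Lemma wS_comp_wr (u x z : C) (p : CHom u x) (g : CHom x z) :
  w _ _ p -> (wS w S _ _ (comp g p) <-> wS w S _ _ g).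
Proof.
move=> wp; have [v2 [q2 [i2 [p2 [pi2 [cs2 wp2 pf2]]]]]] := factorization_cofseq g.
have [v3 [q3 [i3 [p3 [pi3 [cs3 wp3 pf3]]]]]] := factorization_cofseq (comp i2 p).
have [c _ wc] := cofseq_map_w hw cs3 cs2 pf3 wp wp3.
rewrite (wS_iff_cokernel cs2 wp2 pf2) -(S_w_iff wc).
apply: (wS_iff_cokernel cs3 (w_comp hw wp3 wp2)).
by rewrite -comp_assoc pf3 comp_assoc pf2.
Qed.

Lemma wS_2of3 (x y z : C) (f : CHom x y) (g : CHom y z) :
  (wS w S _ _ f -> wS w S _ _ g -> wS w S _ _ (comp g f)) /\
  (wS w S _ _ f -> wS w S _ _ (comp g f) -> wS w S _ _ g) /\
  (wS w S _ _ g -> wS w S _ _ (comp g f) -> wS w S _ _ f).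
Proof.
have [u [q1 [i [p [pi1 [cs1 wp pf]]]]]] := factorization_cofseq f.
have [v [q3 [j [p' [pi3 [cs3 wp' pf']]]]]] := factorization_cofseq (comp g p).
have [d [f' [j' [t [csd cst _]]]]] := cofseq_comp cs1 cs3.
have gf : comp p' (comp j i) = comp g f by rewrite comp_assoc pf' -comp_assoc pf.
rewrite (wS_iff_cokernel cs1 wp pf) (wS_iff_cokernel csd wp' gf).
rewrite -(wS_comp_wr g wp) (wS_iff_cokernel cs3 wp' pf').
by have := S_cofseq cst; tauto.
Qed.

(* Factor a = pa ia and push the cofibration ia out along i; the cokernels of
   a, b and c become the three terms of one cofibration sequence qa >-> d1 ->> qv. *)
Lemma wS_gluing (x y q x' y' q' : C) (i : CHom x y) (pi : CHom y q)
    (i' : CHom x' y') (pi' : CHom y' q')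
    (a : CHom x x') (b : CHom y y') (c : CHom q q') :
  cofseq i pi -> cofseq i' pi' -> comp b i = comp i' a -> comp c pi = comp pi' b ->
  (wS w S _ _ a -> wS w S _ _ b -> wS w S _ _ c) /\
  (wS w S _ _ a -> wS w S _ _ c -> wS w S _ _ b) /\
  (wS w S _ _ b -> wS w S _ _ c -> wS w S _ _ a).
Proof.
move=> cs cs' sq1 sq2; have [ci _] := cs.
have [ua [qa [ia [pa [pia [csa wpa pfa]]]]]] := factorization_cofseq a.
have [cia _] := csa.
have [P [g1 [h1 [po cg1 ch1]]]] := cof_pushout2 cia ci.
have [K [[K1 K2] _]] := po.2 y' (comp i' pa) b
  (ltac:(by rewrite -comp_assoc pfa sq1)).
have [v [j [r [cj [wr rj]]]]] := hfa K.
have [qv [piv csv]] := cofseq_exists cj.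
have [pal [_ csal]] := pushout_cofseq csa po cg1.
have [pig [pig1 csg]] := pushout_cofseq cs (pushout_sym po) ch1.
have [d1 [f1 [j1 [t1 [csd1 cst1 _]]]]] := cofseq_comp csal csv.
have [d2 [f2 [s [t2 [csd2 cst2 E2]]]]] := cofseq_comp csg csv.
have e1 : comp r (comp j h1) = comp i' pa by rewrite comp_assoc rj K1.
have [e he we] := cofseq_map_w hw csd2 cs' e1 wpa wr.
have ce : c = comp e s.
  apply: (cofseq_epi cs); rewrite sq2 -pig1 -!comp_assoc (comp_assoc s) -E2.
  by rewrite -comp_assoc (comp_assoc e) he -comp_assoc (comp_assoc r) rj K2.
have Ea := wS_iff_cokernel csa wpa pfa.
have Eb := wS_iff_cokernel (f := b) csd1 wr (ltac:(by rewrite comp_assoc rj K2)).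
have Ec : wS w S _ _ c <-> S qv.
  by rewrite ce (wS_comp_wl s we); exact (wS_cofseq cst2).
by rewrite Ea Eb Ec; have := S_cofseq cst1; tauto.
Qed.

Lemma wS_admissible : admissible (wS w S).
Proof.
split; first by move=> x y f /(w_iso hw) /wS_of_w.
split=> [x y z f g | x y q x' y' q' i p i' p' a b c]; [exact: wS_2of3 | exact: wS_gluing].
Qed.

Lemma Csup_wS (x : C) : Csup (wS w S) x <-> S x.
Proof.
have [u [q [i [p [pi [cs wp pf]]]]]] := factorization_cofseq (0 : CHom zero x).
rewrite /Csup (wS_iff_cokernel cs wp pf).
rewrite -(S_w_iff (w_iso hw (cofseq_from_zero_iso cs))).
exact: S_w_iff wp.
Qed.

End SerreWeakEquivalences.

Lemma wS_Csup (C : CofCat) (w u : MorClass C) :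
  admissible w -> factorization_axiom w -> admissible u ->
  (forall (x y : C) (f : CHom x y), w _ _ f -> u _ _ f) ->
  forall (x y : C) (f : CHom x y), wS w (Csup u) _ _ f <-> u _ _ f.
Proof.
move=> hw hfa hu wu x y f.
have [v [q [i [p [pi [cs wp pf]]]]]] := factorization_cofseq hfa f.
rewrite (wS_iff_cokernel hw hfa (Csup_wSerre hu wu) cs wp pf).
rewrite -(w_cof_iff_cokernel hu cs) -pf.
have up : u _ _ p := wu _ _ _ wp.
split=> [ui | upi]; [exact (w_comp hu ui up) | exact (w_cancell hu up upi)].
Qed.

Theorem proposition1p8 (C : CofCat) (w : MorClass C) (S : C -> Prop) (u : MorClass C) :
  admissible w -> factorization_axiom w -> wSerre w S ->
  admissible u -> (forall (x y : C) (f : CHom x y), w _ _ f -> u _ _ f) ->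
  (admissible (wS w S) /\
   (forall (x y : C) (f : CHom x y), w _ _ f -> wS w S _ _ f)) /\
  ((forall x : C, Csup (wS w S) x <-> S x) /\
   (forall (x y : C) (f : CHom x y), wS w (Csup u) _ _ f <-> u _ _ f)).
Proof.
move=> hw hfa hS hu wu; split; split.
- exact: wS_admissible.
- by move=> x y f; apply: wS_of_w.
- by move=> x; apply: Csup_wS.
- exact: wS_Csup.
Qed.
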